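(* Let $n \geq 3$ and let $\Delta = T_1 \times \cdots \times T_n$ be a Cartesian product of $n$ trees, regarded as a cube complex. Let $G$ be a group acting on $\Delta$ by cube-complex automorphisms, simply transitively (on the vertices), and let $P = G\backslash \Delta$ be the quotient cube complex. Label and orient the edges of $P$ as induced by the action (an oriented edge of $P$ starting at the base vertex is labelled by the element of $G$ carrying the base vertex of $\Delta$ to the terminus of a lift of that edge; reversing orientation corresponds to inversion of the label), and let $X$ be the set of labels on the edges of the cubes of $P$. Define $R \colon X^2 \to X^2$ as follows: if $x_i x_j x_k x_l$ is the boundary label of a square (2-cell) of $P$, then $R(x_i,x_j) = (x_l^{-1}, x_k^{-1})$; if $x_i$ and $x_j$ do not appear next to each other in a 2-cell of $P$, then $R(x_i,x_j) = (x_i,x_j)$. Then $R$ is a Drinfeld–Manin solution of the Yang–Baxter equation.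
   Context: A Drinfeld–Manin solution of the Yang–Baxter equation is a bijection $R \colon X^2 \to X^2$ on a non-empty set $X$ such that $R^{12}R^{23}R^{12} = R^{23}R^{12}R^{23}$ as maps $X^3 \to X^3$, where $R^{ij}$ denotes $R$ acting on the $i$-th and $j$-th components of $X^3$ (and the identity on the remaining component). *)

From Stdlib Require List.
From Stdlib Require Import ClassicalEpsilon.
From mathcomp Require Import all_boot.

Set Implicit Arguments.
Unset Strict Implicit.
Unset Printing Implicit Defensive.

Fixpoint chain {V : Type} (adj : V -> V -> Prop) (x : V) (s : seq V) : Prop :=
  match s with
  | [::] => True
  | y :: s' => adj x y /\ chain adj y s'
  end.

Definition is_tree {V : Type} (adj : V -> V -> Prop) : Prop :=
  [/\ (forall x y, adj x y -> adj y x),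
      (forall x, ~ adj x x),
      (forall x y, exists s, chain adj x s /\ last x s = y) &
      (forall x s, 2 <= size s -> List.NoDup (x :: s) -> chain adj x s ->
                   ~ adj (last x s) x)].

Definition has_edge {V : Type} (adj : V -> V -> Prop) : Prop :=
  exists x y, adj x y.

Section Product.
Variables (n : nat) (V : 'I_n -> Type) (adj : forall i, V i -> V i -> Prop).

Definition vtx := forall i : 'I_n, V i.

Definition adjD (u v : vtx) : Prop :=
  exists i, adj (u i) (v i) /\ forall j, j != i -> u j = v j.

(* vertex sets of cubes of Delta: products of vertices and edges of the
   factors; [a i = c i] gives a vertex factor, [adj (a i) (c i)] an edge. *)
Definition is_cube (C : vtx -> Prop) : Prop :=
  exists a c : vtx,
    (forall i, a i = c i \/ adj (a i) (c i)) /\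
    (forall v, C v <-> forall i, v i = a i \/ v i = c i).

Definition cube_aut (f : vtx -> vtx) : Prop :=
  bijective f /\
  forall C : vtx -> Prop, is_cube C <-> is_cube (fun v => exists u, C u /\ f u = v).

Definition is_square4 (a b c d : vtx) : Prop :=
  adjD a b /\ adjD b c /\ adjD c d /\ adjD d a /\
  a <> c /\ b <> d /\
  is_cube (fun v => v = a \/ v = b \/ v = c \/ v = d).
End Product.

Definition is_group {G : Type} (mul : G -> G -> G) (one : G) (inv : G -> G) : Prop :=
  [/\ (forall x y z, mul x (mul y z) = mul (mul x y) z),
      (forall x, mul one x = x) &
      (forall x, mul (inv x) x = one)].

Definition is_action {G T : Type} (mul : G -> G -> G) (one : G)
  (act : G -> T -> T) : Prop :=
  (forall v, act one v = v) /\ (forall g h v, act (mul g h) v = act g (act h v)).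

Definition simply_transitive {G T : Type} (act : G -> T -> T) : Prop :=
  forall u v : T, exists! g, act g u = v.

Definition R12 {X : Type} (R : X * X -> X * X) (t : X * X * X) : X * X * X :=
  let: (x, y, z) := t in let: (a, b) := R (x, y) in (a, b, z).
Definition R23 {X : Type} (R : X * X -> X * X) (t : X * X * X) : X * X * X :=
  let: (x, y, z) := t in let: (a, b) := R (y, z) in (x, a, b).

Definition DM_solution (X : Type) (R : X * X -> X * X) : Prop :=
  [/\ inhabited X, bijective R &
      forall t, R12 R (R23 R (R12 R t)) = R23 R (R12 R (R23 R t))].

Section Labels.
Variables (n : nat) (V : 'I_n -> Type) (adj : forall i, V i -> V i -> Prop).
Variables (G : Type) (mul : G -> G -> G) (act : G -> vtx V -> vtx V) (b : vtx V).

(* Labels of edges of P = G\Delta (b the base vertex): an oriented edge of P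
   at the base vertex lifts to an edge (b, act g b) of Delta and gets label g. *)
Definition label_set : Type := {g : G | adjD adj b (act g b)}.

(* (z, w) is R(x, y) in the "square" case: there is a square of P with boundary
   label x y k l, i.e. a square of Delta with vertices b, x.b, xy.b, xyk.b in
   cyclic order, and z = l^{-1} = xyk, w = k^{-1} (equivalently z w = x y). *)
Definition square_cond (x y : label_set) (p : label_set * label_set) : Prop :=
  is_square4 adj b (act (proj1_sig x) b) (act (mul (proj1_sig x) (proj1_sig y)) b) (act (proj1_sig p.1) b)
  /\ mul (proj1_sig p.1) (proj1_sig p.2) = mul (proj1_sig x) (proj1_sig y).

Definition YB_R (q : label_set * label_set) : label_set * label_set :=
  let: (x, y) := q in
  match excluded_middle_informative (exists p, square_cond x y p) with
  | left e => proj1_sig (constructive_indefinite_description _ e)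
  | right _ => (x, y)
  end.
End Labels.

From mathcomp Require Import all_boot.
From Stdlib Require Import ClassicalEpsilon Classical FunctionalExtensionality ProofIrrelevance.

Set Implicit Arguments.
Unset Strict Implicit.
Unset Printing Implicit Defensive.

(* Since G acts simply transitively, a word x y z of labels is the same thing
   as the edge path b, x.b, xy.b, xyz.b of Delta starting at the base vertex,
   and R acting on two consecutive letters replaces the middle vertex of the
   corresponding 2-path by the opposite corner of the square it spans (if
   any).  Every edge of a product of graphs moves exactly one coordinate, its
   direction, and this "flip" exchanges the directions of two consecutive
   edges.  Flipping twice is the identity, so R is an involution; and the
   braid relation reduces to a case analysis on the three directions of a
   3-path, the generic case following from the fact that a 3-path with
   pairwise distinct directions is determined by its endpoints and its
   directions. *)

Section Group.
Variables (G : Type) (mul : G -> G -> G) (one : G) (inv : G -> G).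
Hypothesis hG : is_group mul one inv.

Lemma group_mulA x y z : mul x (mul y z) = mul (mul x y) z.
Proof. by case: hG. Qed.

Lemma group_mul1 x : mul one x = x.
Proof. by case: hG. Qed.

Lemma group_mulV x : mul (inv x) x = one.
Proof. by case: hG. Qed.

Lemma group_mulVr x : mul x (inv x) = one.
Proof.
rewrite -[mul x _]group_mul1 -{1}(group_mulV (inv x)) -group_mulA.
by rewrite (group_mulA (inv x) x) group_mulV group_mul1 group_mulV.
Qed.

Lemma group_mulI x : injective (mul x).
Proof.
move=> y y' e.
by rewrite -(group_mul1 y) -(group_mul1 y') -(group_mulV x) -!group_mulA e.
Qed.

Variables (T : Type) (act : G -> T -> T).
Hypothesis hA : is_action mul one act.

Lemma action_one v : act one v = v.
Proof. by case: hA. Qed.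

Lemma action_mul g h v : act (mul g h) v = act g (act h v).
Proof. by case: hA. Qed.

Lemma action_invK g v : act (inv g) (act g v) = v.
Proof. by rewrite -action_mul group_mulV action_one. Qed.

Lemma simply_transitive_orbit_inj (b : T) g h :
  simply_transitive act -> act g b = act h b -> g = h.
Proof.
move=> hst e; have [g0 [_ u]] := hst b (act g b).
by rewrite -(u g) // (u h).
Qed.

End Group.

Section ProductGraph.
Variables (n : nat) (V : 'I_n -> Type) (adj : forall i, V i -> V i -> Prop).
Hypothesis adj_sym : forall i (x y : V i), adj x y -> adj y x.
Hypothesis adj_irr : forall i (x : V i), ~ adj x x.

Local Notation vtx := (vtx V).

Definition adj_dir (u v : vtx) i := adj (u i) (v i) /\ forall k, k != i -> u k = v k.

Lemma vtx_ext (u v : vtx) : (forall k, u k = v k) -> u = v.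
Proof. exact: functional_extensionality_dep. Qed.

Lemma adj_dir_neq u v i : adj_dir u v i -> u i <> v i.
Proof. by case=> h _ e; rewrite e in h; exact: adj_irr h. Qed.

Lemma adj_dir_vtx_neq u v i : adj_dir u v i -> u <> v.
Proof. by move=> h e; apply: (adj_dir_neq h); rewrite e. Qed.

Lemma adj_dir_sym u v i : adj_dir u v i -> adj_dir v u i.
Proof. by case=> h1 h2; split; [apply: adj_sym | move=> k /h2]. Qed.

Lemma adjD_sym u v : adjD adj u v -> adjD adj v u.
Proof. by case=> i h; exists i; apply: adj_dir_sym. Qed.

Lemma adj_dir_mid_unique u m m' w i j :
  adj_dir u m i -> adj_dir m w j -> adj_dir u m' i -> adj_dir m' w j ->
  i != j -> m = m'.
Proof.
move=> [_ h1] [_ h2] [_ h3] [_ h4] ne; apply: vtx_ext => k.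
case: (eqVneq k i) => [->|ki]; last by rewrite -h1 // h3.
by rewrite h2 // h4.
Qed.

Lemma adj_dir_path3_unique u p q w p' q' i j k :
  adj_dir u p i -> adj_dir p q j -> adj_dir q w k ->
  adj_dir u p' i -> adj_dir p' q' j -> adj_dir q' w k ->
  i != j -> i != k -> j != k -> p = p' /\ q = q'.
Proof.
move=> h1 h2 h3 h1' h2' h3' ij ik jk.
have pp : p = p'.
  apply: vtx_ext => m; case: (eqVneq m i) => [->|mi].
    by rewrite (h2.2 i) // (h3.2 i) // (h2'.2 i) // (h3'.2 i).
  by rewrite -(h1.2 m) // (h1'.2 m).
by split => //; subst p'; exact: (adj_dir_mid_unique h2 h3 h2' h3').
Qed.

(* The fourth corner of the square a -i- b -j- c. *)
Definition splice (a c : vtx) j : vtx := fun k => if k == j then c k else a k.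

Lemma is_cube_splice a b c i j : adj_dir a b i -> adj_dir b c j -> i != j ->
  is_cube adj (fun v => v = a \/ v = b \/ v = c \/ v = splice a c j).
Proof.
move=> [hab1 hab2] [hbc1 hbc2] ne.
have ci : b i = c i by apply: hbc2.
have aj : a j = b j by apply: hab2; rewrite eq_sym.
exists a, c; split.
  move=> k; case: (eqVneq k i) => [->|ki]; first by right; rewrite -ci.
  case: (eqVneq k j) => [->|kj]; first by right; rewrite aj.
  by left; rewrite hab2 // hbc2.
move=> v; split.
  case=> [->|[->|[->|->]]] k; rewrite /splice.
  - by left.
  - by case: (eqVneq k i) => [->|ki]; [right | left; rewrite hab2].
  - by right.
  - by case: eqP; [right|left].
move=> hv.
have oth k : k != i -> k != j -> v k = a k.
  by move=> ki kj; case: (hv k) => // ->; rewrite hab2 // hbc2.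
case: (classic (v i = a i)) => vi; case: (classic (v j = a j)) => vj.
- left; apply: vtx_ext => k.
  case: (eqVneq k i) => [->//|ki]; case: (eqVneq k j) => [->//|kj]; exact: oth.
- right; right; right; apply: vtx_ext => k; rewrite /splice.
  case: (eqVneq k j) => [->|kj]; first by case: (hv j).
  case: (eqVneq k i) => [->//|ki]; exact: oth.
- right; left; apply: vtx_ext => k.
  case: (eqVneq k i) => [->|ki]; first by case: (hv i) => // ->.
  case: (eqVneq k j) => [->|kj]; first by rewrite vj aj.
  by rewrite oth // hab2.
- right; right; left; apply: vtx_ext => k.
  case: (eqVneq k i) => [->|ki]; first by case: (hv i).
  case: (eqVneq k j) => [->|kj]; first by case: (hv j).
  by rewrite oth // hab2 // hbc2.
Qed.

Lemma is_square4_splice a b c i j : adj_dir a b i -> adj_dir b c j -> i != j ->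
  is_square4 adj a b c (splice a c j).
Proof.
move=> hab hbc ne; have cube := is_cube_splice hab hbc ne.
move: hab hbc => [hab1 hab2] [hbc1 hbc2].
have ci : b i = c i by apply: hbc2.
have aj : a j = b j by apply: hab2; rewrite eq_sym.
split; first by exists i.
split; first by exists j.
split.
  exists i; split; first by rewrite /splice (negbTE ne) -ci; apply: adj_sym.
  move=> k ki; rewrite /splice; case: eqP => // /eqP kj.
  by rewrite hab2 // hbc2.
split.
  exists j; split; first by rewrite /splice eqxx aj; apply: adj_sym.
  by move=> k kj; rewrite /splice (negbTE kj).
split; first by move=> e; apply: (adj_dir_neq (conj hab1 hab2)); rewrite ci e.
by split=> // e; apply: (adj_dir_neq (conj hbc1 hbc2)); rewrite e /splice eqxx.
Qed.

Lemma is_square4_dirs_neq a b c d i j :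
  adj_dir a b i -> adj_dir b c j -> is_square4 adj a b c d -> i != j.
Proof.
move=> hab hbc [_ [_ [_ [_ [nac [_ [A [C [_ hmem]]]]]]]]].
apply/negP => /eqP eij; subst j.
have ain : forall k, a k = A k \/ a k = C k by apply/hmem; left.
have bin : forall k, b k = A k \/ b k = C k by apply/hmem; right; left.
have cin : forall k, c k = A k \/ c k = C k by apply/hmem; right; right; left.
have nab := adj_dir_neq hab; have nbc := adj_dir_neq hbc.
have nac' : a i <> c i.
  move=> e; apply: nac; apply: vtx_ext => m.
  by case: (eqVneq m i) => [->//|mi]; rewrite hab.2 // hbc.2.
by case: (ain i) => ea; case: (bin i) => eb; case: (cin i) => ec; congruence.
Qed.

Lemma is_square4_dirs a b c d i j :
  adj_dir a b i -> adj_dir b c j -> is_square4 adj a b c d ->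
  [/\ i != j, adj_dir a d j & adj_dir d c i].
Proof.
move=> hab hbc sq; have ne := is_square4_dirs_neq hab hbc sq.
move: sq => [_ [_ [[l hcd] [[k hda] [_ [nbd _]]]]]].
have ci : b i = c i by apply: hbc.2.
have aj : a j = b j by apply: hab.2; rewrite eq_sym.
have acj : c j <> a j by rewrite aj => e; apply: (adj_dir_neq hbc); rewrite e.
have aci : a i <> c i by rewrite -ci; exact: (adj_dir_neq hab).
have kj : k = j.
  case: (eqVneq k j) => // nkj; exfalso.
  have dj : d j = a j by apply: hda.2; rewrite eq_sym.
  have lj : l = j.
    case: (eqVneq l j) => // nlj; exfalso.
    by apply: acj; rewrite -dj; apply: hcd.2; rewrite eq_sym.
  subst l.
  have ki : k = i.
    case: (eqVneq k i) => // nki; exfalso.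
    by apply: aci; rewrite -(hda.2 i) ?(eq_sym i) // (hcd.2 i) // eq_sym.
  subst k; apply: nbd; apply: vtx_ext => m.
  case: (eqVneq m i) => [->|mi]; first by rewrite ci (hcd.2 i) // eq_sym.
  by rewrite (hda.2 m) // hab.2.
subst k.
have li : l = i.
  case: (eqVneq l i) => // nli; exfalso.
  by apply: aci; rewrite (hcd.2 i) ?(eq_sym i) // (hda.2 i) // eq_sym.
by subst l; split => //; apply: adj_dir_sym.
Qed.

Lemma is_square4_unique a b c d d' :
  is_square4 adj a b c d -> is_square4 adj a b c d' -> d = d'.
Proof.
move=> h h'; have [[i hab] [[j hbc] _]] := h.
have [ne h1 h2] := is_square4_dirs hab hbc h.
have [_ h1' h2'] := is_square4_dirs hab hbc h'.
by apply: (adj_dir_mid_unique h1 h2 h1' h2'); rewrite eq_sym.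
Qed.

Definition flip (u v w : vtx) : vtx :=
  match excluded_middle_informative (exists d, is_square4 adj u v w d) with
  | left e => proj1_sig (constructive_indefinite_description _ e)
  | right _ => v
  end.

Lemma flip_square u v w :
  (exists d, is_square4 adj u v w d) -> is_square4 adj u v w (flip u v w).
Proof.
rewrite /flip => e; case: excluded_middle_informative => // e'.
exact: proj2_sig (constructive_indefinite_description _ e').
Qed.

Lemma flip_nosquare u v w : ~ (exists d, is_square4 adj u v w d) -> flip u v w = v.
Proof. by rewrite /flip => e; case: excluded_middle_informative. Qed.

Lemma flip_dirs u v w i j : adj_dir u v i -> adj_dir v w j -> i != j ->
  adj_dir u (flip u v w) j /\ adj_dir (flip u v w) w i.
Proof.
move=> h1 h2 ne.
have := flip_square (ex_intro _ _ (is_square4_splice h1 h2 ne)).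
by case/(is_square4_dirs h1 h2).
Qed.

Lemma flip_same_dir u v w i : adj_dir u v i -> adj_dir v w i -> flip u v w = v.
Proof.
move=> h1 h2; apply: flip_nosquare => -[d hd].
by have [] := is_square4_dirs h1 h2 hd; rewrite eqxx.
Qed.

Lemma flipK u v w : adjD adj u v -> adjD adj v w -> flip u (flip u v w) w = v.
Proof.
move=> [i h1] [j h2]; case: (eqVneq i j) => [eij|ne].
  by subst j; rewrite !(flip_same_dir h1 h2).
have [d1 d2] := flip_dirs h1 h2 ne.
have ne' : j != i by rewrite eq_sym.
have [e1 e2] := flip_dirs d1 d2 ne'.
exact: (adj_dir_mid_unique e1 e2 h1 h2).
Qed.

Definition flip12 (v0 : vtx) (t : vtx * vtx * vtx) : vtx * vtx * vtx :=
  let: (p1, p2, p3) := t in (flip v0 p1 p2, p2, p3).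

Definition flip23 (t : vtx * vtx * vtx) : vtx * vtx * vtx :=
  let: (p1, p2, p3) := t in (p1, flip p1 p2 p3, p3).

Lemma flip_braid v0 v1 v2 v3 i1 i2 i3 :
  adj_dir v0 v1 i1 -> adj_dir v1 v2 i2 -> adj_dir v2 v3 i3 ->
  flip12 v0 (flip23 (flip12 v0 (v1, v2, v3))) =
  flip23 (flip12 v0 (flip23 (v1, v2, v3))).
Proof.
move=> h1 h2 h3 /=.
case: (eqVneq i1 i2) => [e12|n12].
  subst i2; rewrite (flip_same_dir h1 h2).
  case: (eqVneq i1 i3) => [e13|n13].
    subst i3; rewrite !(flip_same_dir h2 h3) (flip_same_dir h1 h2).
    by rewrite (flip_same_dir h2 h3).
  have [d1 d2] := flip_dirs h2 h3 n13.
  have [e1 e2] := flip_dirs h1 d1 n13.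
  by rewrite (flip_same_dir e2 d2).
have [a1 a2] := flip_dirs h1 h2 n12.
case: (eqVneq i2 i3) => [e23|n23].
  subst i3; have [b1 b2] := flip_dirs a2 h3 n12.
  by rewrite (flip_same_dir a1 b1) (flip_same_dir h2 h3).
case: (eqVneq i1 i3) => [e13|n13].
  subst i3; have [d1 d2] := flip_dirs h2 h3 n23.
  have adj1 : adjD adj v0 v1 by exists i1.
  have adj2 : adjD adj v1 v2 by exists i2.
  have adj3 : adjD adj v2 v3 by exists i1.
  by rewrite (flip_same_dir a2 h3) flipK // (flip_same_dir h1 d1) flipK.
(* Both sides are 3-paths from v0 to v3 with directions i3, i2, i1. *)
have [b1 b2] := flip_dirs a2 h3 n13.
have [c1 c2] := flip_dirs a1 b1 n23.
have [d1 d2] := flip_dirs h2 h3 n23.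
have [e1 e2] := flip_dirs h1 d1 n13.
have [f1 f2] := flip_dirs e2 d2 n12.
have n32 : i3 != i2 by rewrite eq_sym.
have n31 : i3 != i1 by rewrite eq_sym.
have n21 : i2 != i1 by rewrite eq_sym.
by have [-> ->] := adj_dir_path3_unique c1 c2 b2 e1 f1 f2 n32 n31 n21.
Qed.

Lemma is_cube_eq (C C' : vtx -> Prop) :
  (forall v, C v <-> C' v) -> is_cube adj C -> is_cube adj C'.
Proof. by move=> e [A [B [h1 h2]]]; exists A, B; split => // v; rewrite -e. Qed.

Lemma is_cube_edge u v : adjD adj u v -> is_cube adj (fun w => w = u \/ w = v).
Proof.
move=> [i [h1 h2]]; exists u, v; split.
  by move=> k; case: (eqVneq k i) => [->|ki]; [right | left; apply: h2].
move=> w; split; first by case=> -> k; [left|right].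
move=> hw; case: (classic (w i = u i)) => e; [left|right]; apply: vtx_ext => k.
  by case: (eqVneq k i) => [->//|ki]; case: (hw k) => // ->; rewrite h2.
case: (eqVneq k i) => [->|ki]; first by case: (hw i).
by case: (hw k) => // ->; rewrite h2.
Qed.

Lemma is_cube_corners_adjD p q : p <> q ->
  (forall i, p i = q i \/ adj (p i) (q i)) ->
  (forall w, (w = p \/ w = q) <-> forall i, w i = p i \/ w i = q i) ->
  adjD adj p q.
Proof.
move=> pq hpq hmem.
have [i ne] : exists i, p i <> q i.
  apply: NNPP => H; apply: pq; apply: vtx_ext => k; apply: NNPP => hk.
  by apply: H; exists k.
exists i; split; first by case: (hpq i).
move=> k nk; apply: NNPP => hk.
pose w : vtx := fun m => if m == k then q m else p m.
have : w = p \/ w = q by apply/hmem => m; rewrite /w; case: eqP; [right|left].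
case=> e.
  by apply: hk; have := congr1 (fun f : vtx => f k) e; rewrite /w eqxx.
have ik : (i == k) = false by rewrite eq_sym (negbTE nk).
by have := congr1 (fun f : vtx => f i) e; rewrite /w ik.
Qed.

Lemma is_cube_pair_adjD u v :
  u <> v -> is_cube adj (fun w => w = u \/ w = v) -> adjD adj u v.
Proof.
move=> uv [A [C [hAC hmem]]].
have Ain : A = u \/ A = v by apply/hmem => i; left.
have Cin : C = u \/ C = v by apply/hmem => i; right.
have uin : forall i, u i = A i \/ u i = C i by apply/hmem; left.
have vin : forall i, v i = A i \/ v i = C i by apply/hmem; right.
have AC : A <> C.
  move=> e; subst C; apply: uv.
  by apply: vtx_ext => k; case: (uin k) => ->; case: (vin k) => ->.
case: Ain => eA; case: Cin => eC; subst => //.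
- exact: is_cube_corners_adjD.
- apply: adjD_sym; apply: is_cube_corners_adjD => // w.
  by rewrite -hmem; split; case; auto.
Qed.

Lemma cube_aut_adjD f u v : cube_aut adj f -> adjD adj u v -> adjD adj (f u) (f v).
Proof.
move=> [bij hc] h; apply: is_cube_pair_adjD.
  by case: h => i hi /(bij_inj bij); apply: adj_dir_vtx_neq hi.
have := (hc _).1 (is_cube_edge h).
apply: is_cube_eq => w; split; first by move=> [x [[->|->] <-]]; [left|right].
by case=> ->; eexists; split; [left|idtac|right|idtac]; reflexivity.
Qed.

Lemma cube_aut_square4 f a b c d : cube_aut adj f -> is_square4 adj a b c d ->
  is_square4 adj (f a) (f b) (f c) (f d).
Proof.
move=> hf [h1 [h2 [h3 [h4 [h5 [h6 h7]]]]]].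
have inj := bij_inj hf.1.
do 4! (split; first exact: cube_aut_adjD).
do 2! (split; first by move/inj).
have := (hf.2 _).1 h7.
apply: is_cube_eq => w; split.
  by move=> [x [[->|[->|[->|->]]] <-]]; auto.
by case=> [->|[->|[->|->]]]; eexists; split; try reflexivity; auto.
Qed.

Lemma flip_cube_aut f f' u v w : cube_aut adj f -> cube_aut adj f' -> cancel f f' ->
  f (flip u v w) = flip (f u) (f v) (f w).
Proof.
move=> hf hf' fK; case: (classic (exists d, is_square4 adj u v w d)) => [sq|nsq].
  have fsq := cube_aut_square4 hf (flip_square sq).
  by apply: (is_square4_unique fsq); apply: flip_square; eexists; exact: fsq.
rewrite !flip_nosquare // => -[d hd]; apply: nsq; exists (f' d).
by have := cube_aut_square4 hf' hd; rewrite !fK.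
Qed.

Section YangBaxter.
Variables (G : Type) (mul : G -> G -> G) (one : G) (inv : G -> G)
  (act : G -> vtx -> vtx) (b : vtx).
Hypotheses (hG : is_group mul one inv) (hA : is_action mul one act)
  (haut : forall g, cube_aut adj (act g)) (hst : simply_transitive act).

Local Notation L := (label_set adj act b).
Local Notation R := (@YB_R n V adj G mul act b).

Lemma label_eq (x y : L) : proj1_sig x = proj1_sig y -> x = y.
Proof.
case: x => x hx; case: y => y hy /= e; subst y.
by rewrite (proof_irrelevance _ hx hy).
Qed.

Lemma flip_act g u v w : act g (flip u v w) = flip (act g u) (act g v) (act g w).
Proof. exact: flip_cube_aut (haut g) (haut (inv g)) (action_invK hG hA g). Qed.

(* Any square b, x.b, xy.b, d comes from labels, namely z with z.b = d and
   z^-1 x y; so R takes its square branch exactly when flip does. *)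
Lemma YB_R_spec (x y : L) :
  mul (proj1_sig (R (x, y)).1) (proj1_sig (R (x, y)).2) = mul (proj1_sig x) (proj1_sig y) /\
  act (proj1_sig (R (x, y)).1) b =
    flip b (act (proj1_sig x) b) (act (mul (proj1_sig x) (proj1_sig y)) b).
Proof.
rewrite /YB_R; case: excluded_middle_informative => [e|ne].
  have := proj2_sig (constructive_indefinite_description _ e).
  set p := proj1_sig _; case=> hsq hm; split => //.
  by apply: (is_square4_unique hsq); apply: flip_square; eexists; exact: hsq.
split => //; rewrite flip_nosquare // => -[d hd]; apply: ne.
have [_ [_ [hcd [hdb _]]]] := hd.
have [z [hz _]] := hst b d.
have hz' : adjD adj b (act z b) by rewrite hz; apply: adjD_sym.
pose w := mul (inv z) (mul (proj1_sig x) (proj1_sig y)).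
have hw : adjD adj b (act w b).
  rewrite /w (action_mul hA).
  have := cube_aut_adjD (haut (inv z)) (adjD_sym hcd).
  by rewrite -{1}hz (action_invK hG hA).
exists (exist _ z hz', exist _ w hw); split => /=; first by rewrite hz.
by rewrite /w (group_mulA hG) (group_mulVr hG) (group_mul1 hG).
Qed.

Definition path_of (t : L * L * L) : vtx * vtx * vtx :=
  let: (x, y, z) := t in
  (act (proj1_sig x) b, act (mul (proj1_sig x) (proj1_sig y)) b,
   act (mul (mul (proj1_sig x) (proj1_sig y)) (proj1_sig z)) b).

Lemma path_of_inj : injective path_of.
Proof.
case=> [[x y] z] [[x' y'] z'] /= [e1 e2 e3].
have ex := simply_transitive_orbit_inj hst e1.
have exy := simply_transitive_orbit_inj hst e2.
have exyz := simply_transitive_orbit_inj hst e3.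
rewrite exy in exyz; have ez := group_mulI hG exyz.
rewrite ex in exy; have ey := group_mulI hG exy.
by rewrite (label_eq ex) (label_eq ey) (label_eq ez).
Qed.

Lemma path_of_R12 t : path_of (R12 R t) = flip12 b (path_of t).
Proof.
case: t => [[x y] z]; rewrite /R12.
by have := YB_R_spec x y; case: (R (x, y)) => x' y' /= [-> ->].
Qed.

Lemma path_of_R23 t : path_of (R23 R t) = flip23 (path_of t).
Proof.
case: t => [[x y] z]; rewrite /R23.
have := YB_R_spec y z; case: (R (y, z)) => y' z' /= [e1 e2].
rewrite -(group_mulA hG) e1 (group_mulA hG) (action_mul hA) e2 flip_act.
by rewrite -!(action_mul hA) (group_mulA hG).
Qed.

Lemma path_of_adj_dir t : exists i1 i2 i3, let: (v1, v2, v3) := path_of t in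
  [/\ adj_dir b v1 i1, adj_dir v1 v2 i2 & adj_dir v2 v3 i3].
Proof.
case: t => [[[x [i1 h1]] [y hy]] [z hz]] /=.
have [i2 h2] : adjD adj (act x b) (act (mul x y) b).
  by rewrite (action_mul hA); apply: cube_aut_adjD.
have [i3 h3] : adjD adj (act (mul x y) b) (act (mul (mul x y) z) b).
  by rewrite (action_mul hA (mul x y) z); apply: cube_aut_adjD.
by exists i1, i2, i3.
Qed.

Lemma YB_R_involutive : involutive R.
Proof.
case=> x y; have := YB_R_spec x y.
case: (R (x, y)) => [x' y'] [e1 e2]; rewrite /= in e1 e2.
have := YB_R_spec x' y'; case: (R (x', y')) => [x'' y''] [f1 f2]; rewrite /= in f1 f2.
have ex : x'' = x.
  apply: label_eq; apply: (simply_transitive_orbit_inj (b := b) hst).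
  rewrite f2 e1 e2 flipK //; first exact: (proj2_sig x).
  by rewrite (action_mul hA); apply: cube_aut_adjD => //; exact: (proj2_sig y).
by subst x''; congr pair; apply: label_eq; move: f1; rewrite e1 => /(group_mulI hG).
Qed.

Lemma YB_R_DM_solution : (exists v, adjD adj b v) -> DM_solution R.
Proof.
move=> [v hv]; split.
- have [g [hg _]] := hst b v.
  by constructor; exists g; rewrite hg.
- exact: inv_bij YB_R_involutive.
move=> t; apply: path_of_inj.
rewrite !(path_of_R12, path_of_R23).
have [i1 [i2 [i3]]] := path_of_adj_dir t.
case: (path_of t) => [[v1 v2] v3] [h1 h2 h3].
exact: flip_braid h1 h2 h3.
Qed.

End YangBaxter.

End ProductGraph.

Lemma adjD_dfwith n (V : 'I_n -> Type) (adj : forall i, V i -> V i -> Prop)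
    (v : vtx V) i (e : V i) :
  adj i (v i) e -> adjD adj v (dfwith v e).
Proof.
move=> he; exists i; split; first by rewrite dfwith_in.
by move=> k ki; rewrite dfwith_out // eq_sym.
Qed.

Lemma is_tree_neighbour (W : Type) (r : W -> W -> Prop) :
  is_tree r -> has_edge r -> forall x, exists y, r x y.
Proof.
move=> [_ _ conn _] [y [z hyz]] x.
have [[|e s] [/= hs ey]] := conn x y; first by exists z; rewrite ey.
by exists e; case: hs.
Qed.

Theorem theorem1 (n : nat) (V : 'I_n -> Type) (adj : forall i, V i -> V i -> Prop)
  (G : Type) (mul : G -> G -> G) (one : G) (inv : G -> G)
  (act : G -> vtx V -> vtx V) (b : vtx V) :
  3 <= n ->
  (forall i, is_tree (adj i)) ->
  (forall i, has_edge (adj i)) ->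
  is_group mul one inv ->
  is_action mul one act ->
  (forall g, cube_aut adj (act g)) ->
  simply_transitive act ->
  DM_solution (@YB_R n V adj G mul act b).
Proof.
move=> n_ge3 tree edge hG hA haut hst.
have adj_sym i (x y : V i) : adj i x y -> adj i y x by case: (tree i) => + _ _ _; apply.
have adj_irr i (x : V i) : ~ adj i x x by case: (tree i) => _ + _ _; apply.
apply: (YB_R_DM_solution adj_sym adj_irr hG hA haut hst).
pose i0 : 'I_n := Ordinal (leq_trans (isT : 0 < 3) n_ge3).
have [e he] := is_tree_neighbour (tree i0) (edge i0) (b i0).
by exists (dfwith b e); apply: adjD_dfwith.
Qed.
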